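(* Fix a positive integer $k$. Then the sequence $(\Gamma(n^k,(n+1)^k))_{n\ge 1}$ is eventually $1,2,1,2,\ldots$ (alternating between $1$ and $2$). More precisely, let $g(x)$ be the remainder of the polynomial $\left(\sum_{i=1}^k x^{i-1}\right)^k$ upon division by $x^k$ (i.e., the sum of its terms of degree less than $k$). When $k$ is odd, let $M_k$ be the smallest positive integer such that $0<n^k-g(n)<n^k$ and $0<g(-n)<n^k$ for all integers $n\ge M_k$; when $k$ is even, let $M_k$ be the smallest positive integer such that $0<n^k+g(-n)<n^k$ and $0<g(n)<n^k$ for all integers $n\ge M_k$. Then the sequence $(\Gamma(n^k,(n+1)^k))_{n\ge 1}$ alternates between $1$ and $2$ from some index $n\le M_k+1$ onward.
   Context: For relatively prime positive integers $p,q$, exactly one of the equations $px+qy=\frac{(p-1)(q-1)}{2}$ (Equation 1) and $px+qy+1=\frac{(p-1)(q-1)}{2}$ (Equation 2) has a solution in nonnegative integers $(x,y)$. For positive integers $a,b$ with $d=\gcd(a,b)$, $\Gamma(a,b)=1$ if Equation 1 with $(p,q)=(a/d,b/d)$ has a nonnegative integer solution, and $\Gamma(a,b)=2$ otherwise. *)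

From HB Require Import structures.
From mathcomp Require Import all_boot all_order all_algebra.
From Stdlib Require Import ClassicalDescription.
Set Implicit Arguments. Unset Strict Implicit. Unset Printing Implicit Defensive.
Import Order.TTheory GRing.Theory Num.Theory.

Definition Gamma (a b : nat) : nat :=
  let d := gcdn a b in
  let p := a %/ d in
  let q := b %/ d in
  if excluded_middle_informative
       (exists x y : nat, p * x + q * y = (p - 1) * (q - 1) %/ 2)
  then 1 else 2.

Definition gpoly (k : nat) : {poly int} :=
  (((\sum_(1 <= i < k.+1) 'X^(i.-1)) ^+ k) %% 'X^k)%R.

Definition Mprop (k M : nat) : Prop :=
  forall n : nat, (M <= n)%N ->
    let N : int := ((n%:Z) ^+ k)%R in
    if odd k then
      (0 < N - (gpoly k).[n%:Z] < N)%R /\ (0 < (gpoly k).[- n%:Z] < N)%R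
    else
      (0 < N + (gpoly k).[- n%:Z] < N)%R /\ (0 < (gpoly k).[n%:Z] < N)%R.

Definition is_Mk (k M : nat) : Prop :=
  (0 < M)%N /\ Mprop k M /\ (forall m : nat, (0 < m)%N -> Mprop k m -> (M <= m)%N).

Definition alternates_from (k n0 : nat) : Prop :=
  forall n : nat, (n0 <= n)%N ->
    Gamma (n ^ k) (n.+1 ^ k) \in [:: 1%N; 2%N] /\
    Gamma (n ^ k) (n.+1 ^ k) != Gamma (n.+1 ^ k) (n.+2 ^ k).

From HB Require Import structures.
From mathcomp Require Import all_boot all_order all_algebra.
From mathcomp Require Import zify ring lra.
From Stdlib Require Import ClassicalDescription.
Set Implicit Arguments. Unset Strict Implicit. Unset Printing Implicit Defensive.
Import Order.TTheory GRing.Theory Num.Theory.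

(* For odd p > 1 the equation p x + q y = (p-1)(q-1)/2 is equivalent to
   p(2x+1) + q(2y+1) = pq + 1, so it is solvable exactly when the inverse of q
   modulo p, taken in [0, p), is odd.
   For the pair n^k, (n+1)^k let x be the odd one of -n and n+1, so that
   {|x|, |1-x|} = {n, n+1}.  As (1 - X)(1 + X + ... + X^(k-1)) = 1 - X^k, the
   truncation g satisfies (1-x)^k g(x) = 1 mod x^k, so +-g(x) inverts |1-x|^k
   modulo |x|^k.  For n >= M_k this representative lies strictly between -|x|^k
   and |x|^k, with a sign fixed by the parities of n and k; shifting a negative
   one by the odd modulus flips its parity.  Since g(x) = g(1) mod 2,
   Gamma(n^k, (n+1)^k) = 1 exactly when g(1) + n + k is odd, which alternates
   with n.  The bounds defining M_k hold for every n > g(1), because there the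
   top coefficient of g dominates. *)

Definition representable (p q : nat) : Prop :=
  exists x y : nat, p * x + q * y = (p - 1) * (q - 1) %/ 2.

Lemma representableC p q : representable p q <-> representable q p.
Proof.
by split=> -[x [y E]]; exists y, x; rewrite addnC [(_ - 1) * _]mulnC.
Qed.

Lemma Gamma_coprime_eq p q (b : bool) :
  coprime p q -> (representable p q <-> b) -> Gamma p q = if b then 1 else 2.
Proof.
move=> /eqP cop_pq repr_b; rewrite /Gamma cop_pq !divn1.
case: excluded_middle_informative => [/repr_b -> // | not_repr].
by case: b repr_b => // repr_b; case: not_repr; apply/repr_b.
Qed.

Lemma representable_odd_sum p q : odd p -> 0 < q ->
  representable p q <-> exists x y, p * (2 * x + 1) + q * (2 * y + 1) = p * q + 1.
Proof.
move=> odd_p q_gt0; rewrite /representable.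
have [a ->] : exists a, p = 2 * a + 1 by exists p./2; lia.
have -> : (2 * a + 1 - 1) * (q - 1) %/ 2 = a * (q - 1) by rewrite addnK -mulnA mulKn.
by split=> -[x [y E]]; exists x, y; nia.
Qed.

Lemma modn_inverse_uniq p q u v : u < p -> v < p ->
  u * q = 1 %[mod p] -> v * q = 1 %[mod p] -> u = v.
Proof.
move=> u_lt v_lt uq1 vq1; rewrite -(modn_small u_lt) -(modn_small v_lt).
rewrite -[u]muln1 -[v]muln1 -modnMmr -vq1 modnMmr mulnCA.
by rewrite -modnMmr uq1 modnMmr.
Qed.

Lemma representable_inverse_odd p q u : 1 < p -> odd p -> u < p ->
  u * q = 1 %[mod p] -> representable p q <-> odd u.
Proof.
move=> p_gt1 odd_p u_lt uq1.
have q_gt0 : 0 < q.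
  by case: q uq1 => // /eqP; rewrite muln0 mod0n eq_sym modn_small.
rewrite representable_odd_sum //; split=> [[x [y E]] | odd_u].
  have x_le : 2 * x + 1 <= q by rewrite -ltnS -(ltn_pmul2l (ltnW p_gt1)) mulnS; lia.
  have y_lt : 2 * y + 1 < p.
    have : p <= p * (2 * x + 1) by rewrite leq_pmulr ?addn1.
    by rewrite -(ltn_pmul2l q_gt0); lia.
  suff -> : u = 2 * y + 1 by rewrite oddD oddM.
  apply: modn_inverse_uniq uq1 _ => //.
  have -> : (2 * y + 1) * q = (q - (2 * x + 1)) * p + 1 by rewrite mulnBl; lia.
  by rewrite modnMDl.
have [t E] : exists t, u * q = t * p + 1.
  by exists (u * q %/ p); rewrite {1}(divn_eq (u * q) p) uq1 modn_small.
have t_lt : t < q.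
  have uq_lt : u * q < p * q by rewrite ltn_pmul2r.
  by rewrite -(ltn_pmul2r (ltnW p_gt1)); lia.
have odd_qt : odd (q - t).
  have := congr1 odd E; rewrite oddD !oddM odd_p odd_u /= andbT => odd_q.
  by rewrite oddB ?(ltnW t_lt) // odd_q; case: (odd t).
exists (q - t)./2, u./2.
have -> : 2 * (q - t)./2 + 1 = q - t by lia.
have -> : 2 * u./2 + 1 = u by lia.
have : p * t <= p * q by rewrite leq_mul2l ltnW ?orbT.
by rewrite mulnBr; lia.
Qed.

Local Open Scope ring_scope.

Lemma representable_inverse_sign (p q : nat) (V : int) : (1 < p)%N -> odd p ->
  (q%:Z * V = 1 %[mod p])%Z -> 0 < `|V| < p%:Z ->
  representable p q <-> odd `|V|%N (+) (V < 0).
Proof.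
move=> p_gt1 odd_p qV1 V_bounds.
have reduced U : 0 <= U < p%:Z -> (q%:Z * U = 1 %[mod p])%Z ->
    representable p q <-> odd `|U|%N.
  move=> U_bounds qU1; apply: representable_inverse_odd => //; first by lia.
  move: qU1; rewrite -[U]gez0_abs; last by lia.
  by rewrite -PoszM !modz_nat mulnC => -[].
have [V_lt0 | V_ge0] := boolP (V < 0).
  rewrite (reduced (V + p%:Z)); [| lia |].
    by rewrite addbT; split; lia.
  by rewrite mulrDr -modzDmr modzMl addr0.
by rewrite addbF (reduced V) //; lia.
Qed.

Section NonnegativeCoefficients.

Variable R : realDomainType.
Implicit Types (P : {poly R}) (x : R).

Lemma coef_exp_ge0 P m i : (forall j, 0 <= P`_j) -> 0 <= (P ^+ m)`_i.
Proof.
move=> P_ge0; elim: m i => [|m IHm] i; first by rewrite expr0 coef1; case: eqP.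
by rewrite exprS coefM; apply: sumr_ge0 => j _; apply: mulr_ge0.
Qed.

Lemma norm_horner_le P x : (forall i, 0 <= P`_i) -> `|P.[x]| <= P.[`|x|].
Proof.
move=> P_ge0; rewrite !horner_coef; apply: le_trans (ler_norm_sum _ _ _) _.
by apply: ler_sum => i _; rewrite normrM normrX ger0_norm.
Qed.

Lemma horner_lt_expn P d x : (forall i, 0 <= P`_i) -> (size P <= d)%N ->
  1 <= x -> P.[1] < x -> P.[x] < x ^+ d.
Proof.
move=> P_ge0 size_P x_ge1 P1_lt; have x_gt0 : 0 < x by apply: lt_le_trans ltr01 x_ge1.
rewrite -(ltr_pM2l x_gt0); apply: (@le_lt_trans _ _ (P.[1] * x ^+ d)).
  rewrite (horner_coef_wide x size_P) (horner_coef_wide 1 size_P).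
  rewrite mulr_sumr mulr_suml; apply: ler_sum => i _.
  rewrite expr1n mulr1 mulrCA -exprS; apply: ler_wpM2l => //.
  exact: ler_weXn2l.
by rewrite ltr_pM2r // exprn_gt0.
Qed.

Lemma horner_sign P d x : (forall i, 0 <= P`_i) -> (size P <= d.+1)%N ->
  1 <= P`_d -> P.[1] < `|x| -> 0 < x ^+ d * P.[x].
Proof.
move=> P_ge0 size_P lead_ge1 P1_lt.
(* |x^d Q(x)| < x^(2d) <= P_d x^(2d), where Q drops the degree-d term of P. *)
set Q := P - P`_d *: 'X^d.
have Q_ge0 i : 0 <= Q`_i.
  rewrite coefB coefZ coefXn.
  by have [->|_] := eqVneq i d; rewrite ?mulr1 ?subrr ?mulr0 ?subr0.
have size_Q : (size Q <= d)%N.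
  apply/leq_sizeP => j; rewrite leq_eqVlt => /predU1P[<- | d_lt_j].
    by rewrite coefB coefZ coefXn eqxx mulr1 subrr.
  rewrite coefB coefZ coefXn gtn_eqF // mulr0 subr0.
  by move/leq_sizeP: size_P; apply.
have PE : P = Q + P`_d *: 'X^d by rewrite subrK.
have Q1_ge0 : 0 <= Q.[1].
  by have := norm_horner_le 1 Q_ge0; rewrite normr1; apply: le_trans.
have P1E : P.[1] = Q.[1] + P`_d by rewrite {1}PE hornerE hornerZ hornerXn expr1n mulr1.
have x_ge1 : 1 <= `|x| by lra.
have Qx_lt : `|Q.[x]| < `|x| ^+ d.
  apply: le_lt_trans (norm_horner_le x Q_ge0) _.
  by apply: horner_lt_expn => //; lra.
have xd_gt0 : 0 < `|x| ^+ d by rewrite exprn_gt0 // (lt_le_trans ltr01).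
have : `|x ^+ d * Q.[x]| < x ^+ d * x ^+ d.
  by rewrite -expr2 -real_normK ?num_real // expr2 !normrM !normrX ltr_pM2l.
rewrite PE hornerE hornerZ hornerXn mulrDr mulrCA.
have : x ^+ d * x ^+ d <= P`_d * (x ^+ d * x ^+ d).
  by rewrite ler_peMl // -expr2 sqr_ge0.
have := lerNnormlW (lexx `|x ^+ d * Q.[x]|); lra.
Qed.

End NonnegativeCoefficients.

Lemma gpolyE k : gpoly k = take_poly k ((\poly_(i < k) 1) ^+ k).
Proof.
rewrite /gpoly Pdiv.IdomainMonic.take_poly_modp poly_def big_add1 big_mkord /=.
by congr (_ ^+ _ %% _); apply: eq_bigr => i _; rewrite scale1r.
Qed.

Lemma coef_gpoly_ge0 k i : 0 <= (gpoly k)`_i.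
Proof.
rewrite gpolyE coef_take_poly; case: ifP => // _.
by apply: coef_exp_ge0 => j; rewrite coef_poly; case: ifP.
Qed.

Lemma size_gpoly k : (size (gpoly k) <= k)%N.
Proof. by rewrite gpolyE size_take_poly. Qed.

Lemma coef_gpoly_last d : 1 <= (gpoly d.+1)`_d.
Proof.
rewrite gpolyE coef_take_poly ltnSn exprS coefM big_ord_recr /= subnn.
set s := \poly_(i < d.+1) 1.
have s_ge0 j : 0 <= s`_j by rewrite coef_poly; case: ifP.
have -> : (s ^+ d)`_0 = 1.
  by rewrite -horner_coef0 horner_exp horner_coef0 coef_poly expr1n.
rewrite coef_poly ltnSn mulr1 -[1 in X in X <= _]add0r lerD2r.
by apply: sumr_ge0 => j _; rewrite mulr_ge0 ?coef_exp_ge0.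
Qed.

Lemma gpoly_inverse k : exists W : {poly int}, (1 - 'X) ^+ k * gpoly k = 1 + 'X^k * W.
Proof.
set s := \poly_(i < k) (1 : int).
have s_geom : (1 - 'X) * s = 1 - 'X^k.
  rewrite -[1 in RHS](expr1n _ k) subrXX /s poly_def; congr (_ * _).
  by apply: eq_bigr => i _; rewrite expr1n mul1r scale1r.
have [S HS] : exists S : {poly int}, (1 - 'X^k) ^+ k = 1 + 'X^k * S.
  have := subrXX (1 - 'X^k : {poly int}) 1 k.
  rewrite expr1n; set T := \sum_(i < k) _ => E.
  by exists (- T); rewrite -[LHS](subrK 1) E; ring.
have divE := Pdiv.IdomainMonic.divp_eq (monicXn _ k) (s ^+ k).
have gE : gpoly k + (s ^+ k %/ 'X^k) * 'X^k = s ^+ k.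
  by rewrite gpolyE Pdiv.IdomainMonic.take_poly_modp addrC -divE.
exists (S - (1 - 'X) ^+ k * (s ^+ k %/ 'X^k)).
by rewrite -(addrK ((s ^+ k %/ 'X^k) * 'X^k) (gpoly k)) gE mulrBr -exprMn s_geom HS; ring.
Qed.

Lemma gpoly_inverse_mod k (x : int) : ((1 - x) ^+ k * (gpoly k).[x] = 1 %[mod x ^+ k])%Z.
Proof.
have [W HW] := gpoly_inverse k.
have := congr1 (horner^~ x) HW; rewrite /= !hornerE => ->.
by rewrite addrC mulrC modzMDl.
Qed.

Lemma dvdz_horner_sub (P : {poly int}) (x y : int) : (x - y %| P.[x] - P.[y])%Z.
Proof.
have /factor_theorem[Q PE] : root (P - P.[y]%:P) y by rewrite /root !hornerE subrr.
apply/dvdzP; exists Q.[x].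
by have := congr1 (horner^~ x) PE; rewrite /= !hornerE.
Qed.

Lemma odd_horner (P : {poly int}) (x : int) :
  odd `|x|%N -> odd `|P.[x]%R|%N = odd `|P.[1]%R|%N.
Proof.
move=> odd_x; have two_dvd : (2 %| x - 1)%Z by lia.
move: (dvdz_trans two_dvd (dvdz_horner_sub P x 1)).
(* lia only takes terms whose type is syntactically [int] as integer atoms. *)
by move: P.[x] P.[1] => a b; lia.
Qed.

Lemma gpoly_bounds k (n : nat) : (0 < k)%N -> (gpoly k).[1] < n%:Z ->
  0 < (gpoly k).[n%:Z] < n%:Z ^+ k /\
  0 < (-1) ^+ k.+1 * (gpoly k).[- n%:Z] < n%:Z ^+ k.
Proof.
case: k => // d _; set g := gpoly d.+1 => g1_lt.
have g_ge0 := coef_gpoly_ge0 d.+1.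
have sign x : g.[1] < `|x| -> 0 < x ^+ d * g.[x].
  exact: horner_sign g_ge0 (size_gpoly _) (coef_gpoly_last d).
have g1_ge0 : 0 <= g.[1].
  by have := norm_horner_le 1 g_ge0; rewrite normr1; apply: le_trans.
have n_gt0 : 0 < n%:Z := le_lt_trans g1_ge0 g1_lt.
have nd_gt0 : 0 < n%:Z ^+ d by rewrite exprn_gt0.
have gn_lt : g.[n%:Z] < n%:Z ^+ d.+1.
  exact: horner_lt_expn g_ge0 (size_gpoly _) (n_gt0 : 1 <= n%:Z) g1_lt.
have gn_gt0 : 0 < g.[n%:Z].
  by rewrite -(pmulr_rgt0 _ nd_gt0) sign // gtr0_norm.
have g_neg_le : `|g.[- n%:Z]| <= g.[n%:Z].
  by have := norm_horner_le (- n%:Z) g_ge0; rewrite normrN (gtr0_norm n_gt0).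
have := sign (- n%:Z); rewrite normrN gtr0_norm // => /(_ g1_lt).
rewrite [(- _) ^+ d]exprNn mulrAC pmulr_lgt0 // => sign_neg.
have -> : (-1) ^+ d.+2 = (-1) ^+ d :> int by rewrite !exprS !mulN1r opprK.
rewrite gn_gt0 gn_lt sign_neg; split=> //.
by apply: le_lt_trans gn_lt; apply: le_trans g_neg_le; rewrite -(normrMsign d) ler_norm.
Qed.

Lemma MpropE k M : Mprop k M <-> forall n : nat, (M <= n)%N ->
  0 < (gpoly k).[n%:Z] < n%:Z ^+ k /\
  0 < (-1) ^+ k.+1 * (gpoly k).[- n%:Z] < n%:Z ^+ k.
Proof.
(* Multiplying g(-n) by its expected sign merges the two parity branches. *)
rewrite /Mprop -signr_odd /=.
by case: (odd k); rewrite ?expr0 ?mul1r ?expr1 ?mulN1r;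
  split=> bounds n /bounds; lra.
Qed.

Lemma Mprop_gpoly1 k : (0 < k)%N -> Mprop k `|(gpoly k).[1]%R|.+1.
Proof.
move=> k_gt0; apply/MpropE => n n_gt; apply: gpoly_bounds => //.
by apply: le_lt_trans (ler_norm _) _; rewrite -abszE ltz_nat.
Qed.

Lemma PoszX m k : (m ^ k)%N%:Z = m%:Z ^+ k.
Proof. by rewrite -natz natrX natz. Qed.

Section ConsecutivePowers.

Variables k M : nat.
Hypotheses (k_gt0 : (0 < k)%N) (hM : Mprop k M).

Lemma expn_gt1 m : (1 < m)%N -> (1 < m ^ k)%N.
Proof. by move=> m_gt1; rewrite -[1%N](expn0 m) ltn_exp2l. Qed.

Lemma representable_powers_odd n : (M <= n)%N -> (1 < n)%N -> odd n ->
  representable (n ^ k) (n.+1 ^ k) <-> ~~ (odd `|(gpoly k).[1]%R| (+) odd k).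
Proof.
move=> M_le n_gt1 odd_n; set V := (gpoly k).[- n%:Z].
have [_ /andP[sV_gt0 sV_lt]] := (MpropE k M).1 hM n M_le.
have V_lt0 : (V < 0) = ~~ odd k.
  move: sV_gt0; rewrite -signr_odd /=.
  by case: (odd k); rewrite ?expr0 ?mul1r ?expr1 ?mulN1r ?oppr_gt0;
    [move/lt_gtF | move->].
have V_bounds : 0 < `|V| < (n ^ k)%N%:Z.
  by rewrite -(normrMsign k.+1) gtr0_norm // sV_gt0 PoszX.
have V_inv : ((n.+1 ^ k)%N%:Z * V = 1 %[mod (n ^ k)%N])%Z.
  have -> : (n ^ k)%N = `|(- n%:Z) ^+ k|%N by rewrite abszX abszN absz_nat.
  rewrite !modz_abs PoszX.
  have -> : n.+1%:Z = 1 - - n%:Z by lia.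
  exact: gpoly_inverse_mod.
have odd_p : odd (n ^ k) by rewrite oddX odd_n orbT.
rewrite (representable_inverse_sign (expn_gt1 n_gt1) odd_p V_inv V_bounds).
by rewrite V_lt0 /V odd_horner ?abszN ?absz_nat // addbN.
Qed.

Lemma representable_powers_even n : (M <= n)%N -> (1 < n)%N -> ~~ odd n ->
  representable (n.+1 ^ k) (n ^ k) <-> odd `|(gpoly k).[1]%R| (+) odd k.
Proof.
move=> M_le n_gt1 even_n; set V := (-1) ^+ k * (gpoly k).[n.+1%:Z].
have [/andP[g_gt0 g_lt] _] := (MpropE k M).1 hM n.+1 (leqW M_le).
have V_lt0 : (V < 0) = odd k.
  rewrite /V -signr_odd.
  by case: (odd k); rewrite ?expr0 ?mul1r ?expr1 ?mulN1r ?oppr_lt0 ?g_gt0 ?(lt_gtF g_gt0).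
have V_bounds : 0 < `|V| < (n.+1 ^ k)%N%:Z.
  by rewrite normrMsign gtr0_norm // g_gt0 PoszX.
have V_inv : ((n ^ k)%N%:Z * V = 1 %[mod (n.+1 ^ k)%N])%Z.
  have -> : (n.+1 ^ k)%N = `|n.+1%:Z ^+ k|%N by rewrite abszX absz_nat.
  rewrite !modz_abs PoszX /V mulrA -exprMn.
  have -> : n%:Z * -1 = 1 - n.+1%:Z by lia.
  exact: gpoly_inverse_mod.
have odd_p : odd (n.+1 ^ k) by rewrite oddX /= even_n orbT.
rewrite (representable_inverse_sign (expn_gt1 (leqW n_gt1)) odd_p V_inv V_bounds).
by rewrite V_lt0 /V abszMsign odd_horner ?absz_nat //= (negbTE even_n).
Qed.

Lemma Gamma_consecutive_powers n : (M <= n)%N -> (1 < n)%N ->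
  Gamma (n ^ k) (n.+1 ^ k) =
  if odd `|(gpoly k).[1]%R| (+) odd n (+) odd k then 1%N else 2%N.
Proof.
move=> M_le n_gt1.
apply: Gamma_coprime_eq; first by rewrite coprimeXl // coprimeXr // coprimenS.
case: (boolP (odd n)) => [odd_n | even_n]; rewrite ?addbT ?addbF.
  by rewrite addNb representable_powers_odd.
by rewrite representableC representable_powers_even.
Qed.

Lemma alternates_from_Mprop : alternates_from k (maxn M 2).
Proof.
move=> n; rewrite geq_max => /andP[M_le n_ge2].
rewrite (Gamma_consecutive_powers M_le n_ge2).
rewrite (Gamma_consecutive_powers (leqW M_le) (leqW n_ge2)) /=.
by case: (odd `|_|); case: (odd n); case: (odd k).
Qed.

End ConsecutivePowers.

Local Close Scope ring_scope.

Theorem theorem1p5 (k : nat) (hk : (0 < k)%N) :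
  (exists n0 : nat, (1 <= n0)%N /\ alternates_from k n0) /\
  (forall M : nat, is_Mk k M ->
     exists n0 : nat, (1 <= n0)%N /\ (n0 <= M.+1)%N /\ alternates_from k n0).
Proof.
split.
  exists (maxn `|(gpoly k).[1]%R|.+1 2); split; first by rewrite leq_max orbT.
  exact: alternates_from_Mprop hk (Mprop_gpoly1 hk).
move=> M [M_gt0 [hM _]]; exists (maxn M 2); split; first by rewrite leq_max orbT.
by split; [lia | exact: alternates_from_Mprop].
Qed.
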